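(* Let $1\le\ell\le n$ and fix $m$ with $0\le m\le\ell$. For every $v\in\bigoplus_{s=0}^m\mathcal{Y}_s$, \[\sum_{i,j=1}^n\mathbf{V}_{ij}(v)\ge\big((\ell-m)n-\ell^2\big)\|v\|^2.\]
   Context: Vectors in $\mathbb{R}^{\binom{n}{\ell}}$ are indexed by $\ell$-subsets of $[n]$. For a sequence $\varphi=(a_1,b_1,\ldots,a_s,b_s)$ of $2s$ distinct elements of $[n]$, $u^\varphi_S=\prod_{i=1}^s(\mathbf{1}_{a_i\in S}-\mathbf{1}_{b_i\in S})$ for $|S|=\ell$ ($u^\varnothing$ is the all-ones vector), and $\mathcal{Y}_s=\mathrm{span}\{u^\varphi:|\varphi|=2s\}$. The voting matrix $\mathbf{V}(v)$ is the symmetric $n\times n$ matrix with $\mathbf{V}_{ii}(v)=0$ and $\mathbf{V}_{ij}(v)=\frac12\sum_{|S|=|T|=\ell}v_Sv_T\mathbf{1}_{S\triangle T=\{i,j\}}$ for $i\ne j$. *)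

From HB Require Import structures.
From mathcomp Require Import all_boot all_order all_algebra.
Set Implicit Arguments. Unset Strict Implicit. Unset Printing Implicit Defensive.
Import Order.TTheory GRing.Theory Num.Theory.
Local Open Scope ring_scope.

(* A vector of R^{binom(n,l)} is a function on subsets of [n] = 'I_n;
   only its values on l-subsets are ever used. *)
Definition vec (R : Type) (n : nat) := {set 'I_n} -> R.

(* phi = (a_1,b_1,...,a_s,b_s) encoded as a pair of maps a b : 'I_s -> 'I_n,
   with phi i = (a_i, b_i).  All 2s entries must be distinct. *)
Definition seq_distinct (n s : nat) (phi : {ffun 'I_s -> 'I_n * 'I_n}) : bool :=
  [forall i, forall j,
     ((i != j) ==> ((phi i).1 != (phi j).1) && ((phi i).2 != (phi j).2))
     && ((phi i).1 != (phi j).2)].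

Definition u_vec (R : pzRingType) (n s : nat) (phi : {ffun 'I_s -> 'I_n * 'I_n})
  : vec R n :=
  fun S => \prod_(i < s) (((phi i).1 \in S)%:R - ((phi i).2 \in S)%:R).

Definition inY (R : pzRingType) (n l s : nat) (v : vec R n) : Prop :=
  exists c : {ffun 'I_s -> 'I_n * 'I_n} -> R,
    forall S : {set 'I_n}, #|S| = l ->
      v S = \sum_(phi | seq_distinct phi) c phi * u_vec R phi S.

Definition inYsum (R : pzRingType) (n l m : nat) (v : vec R n) : Prop :=
  exists y : nat -> vec R n,
    (forall s, (s <= m)%N -> inY l s (y s)) /\
    forall S : {set 'I_n}, #|S| = l -> v S = \sum_(s < m.+1) y s S.

Definition sqnorm (R : pzRingType) (n l : nat) (v : vec R n) : R :=
  \sum_(S : {set 'I_n} | #|S| == l) v S ^+ 2.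

Definition Vmat (R : fieldType) (n l : nat) (v : vec R n) (i j : 'I_n) : R :=
  if i == j then 0 else
  2^-1 * \sum_(S : {set 'I_n} | #|S| == l) \sum_(T : {set 'I_n} | #|T| == l)
           v S * v T * (((S :\: T) :|: (T :\: S)) == [set i; j])%:R.

(* Sum_{i,j} V_ij(v) is the quadratic form of the Johnson graph J(n, l), in which
   S ~ T iff their symmetric difference {i, j} has two elements: such a pair is
   counted by both orderings (i, j) and (j, i), and the factor 1/2 cancels one.
   Every u^phi with |phi| = 2s is an eigenvector, with eigenvalue
   (l - s)(n - l - s) - s: removing one element of S multiplies u^phi by |S| - s
   (induction on s), adding one element is conjugate to removing one by
   complementation, and a swap is an addition after a removal.  Eigenvalues of
   distinct s, t <= n/2 differ, while Y_s = 0 for 2s > n, so the Y_s are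
   orthogonal and Sum V_ij(v) = Sum_s lambda_s |y_s|^2 with every
   lambda_s >= (l - m) n - l^2 for s <= m. *)

From HB Require Import structures.
From mathcomp Require Import all_boot all_order all_algebra.
From mathcomp Require Import ring lra zify.
Set Implicit Arguments. Unset Strict Implicit. Unset Printing Implicit Defensive.
Import Order.TTheory GRing.Theory Num.Theory.
Local Open Scope ring_scope.

Local Notation symdiff A B := ((A :\: B) :|: (B :\: A)).

Definition swap_sum (R : nmodType) n (w : vec R n) (S : {set 'I_n}) : R :=
  \sum_(x in S) \sum_(y in ~: S) w (y |: (S :\ x)).

Lemma card_swap (T : finType) (S : {set T}) x y : x \in S -> y \notin S ->
  #|y |: (S :\ x)| = #|S|.
Proof. by move=> xS yS; rewrite cardsU1 in_setD1 (negPf yS) andbF (cardsD1 x S) xS. Qed.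

Lemma seq_distinct_behead n s (phi : {ffun 'I_s.+1 -> 'I_n * 'I_n}) :
  seq_distinct phi -> seq_distinct [ffun i => phi (lift ord0 i)].
Proof.
move=> /forallP dphi; apply/forallP => i; apply/forallP => j; rewrite !ffunE.
by have /forallP/(_ (lift ord0 j)) := dphi (lift ord0 i); rewrite (inj_eq lift_inj).
Qed.

Lemma seq_distinct_head n s (phi : {ffun 'I_s.+1 -> 'I_n * 'I_n}) i x :
  seq_distinct phi -> (x == (phi ord0).1) || (x == (phi ord0).2) ->
  ((phi (lift ord0 i)).1 != x) && ((phi (lift ord0 i)).2 != x).
Proof.
move=> /forallP dphi xp; have i0 : lift ord0 i != ord0 by rewrite eq_sym neq_lift.
have /forallP/(_ ord0)/andP[/implyP/(_ i0)/andP[a1 b2] a2] := dphi (lift ord0 i).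
have /forallP/(_ (lift ord0 i))/andP[_ b1] := dphi ord0.
by case/orP: xp => /eqP ->; rewrite ?a1 ?a2 ?b2 // eq_sym.
Qed.

Lemma seq_distinct_card n s (phi : {ffun 'I_s -> 'I_n * 'I_n}) :
  seq_distinct phi -> (s + s <= n)%N.
Proof.
move=> /forallP dphi.
pose e (k : 'I_s + 'I_s) := match k with inl i => (phi i).1 | inr i => (phi i).2 end.
suff /leq_card : injective e by rewrite card_sum !card_ord.
have dP i j : [/\ i != j -> (phi i).1 != (phi j).1,
                  i != j -> (phi i).2 != (phi j).2 & (phi i).1 != (phi j).2].
  by have /forallP/(_ j)/andP[/implyP h ab] := dphi i; split=> // /h /andP[].
move=> [i|i] [j|j] /= eij; have [aa bb ab] := dP i j; have [_ _ ba] := dP j i.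
- by case: (eqVneq i j) => [->//|/aa]; rewrite eij eqxx.
- by rewrite eij eqxx in ab.
- by rewrite eij eqxx in ba.
- by case: (eqVneq i j) => [->//|/bb]; rewrite eij eqxx.
Qed.

Section SignedIndicators.
Variables (R : comPzRingType) (n : nat).
Implicit Types (S X : {set 'I_n}) (x z : 'I_n).

Lemma natr_setD1 S x z : x \in S ->
  ((z \in S :\ x)%:R : R) = (z \in S)%:R - (x == z)%:R.
Proof.
move=> xS; rewrite in_setD1 (eq_sym z).
by case: eqP => [<-|_]; rewrite /= ?xS ?subrr ?subr0.
Qed.

Lemma sum_eq_natr S z : \sum_(x in S) ((x == z)%:R : R) = (z \in S)%:R.
Proof.
have [zS|zS] := boolP (z \in S).
  by rewrite (bigD1 z) //= eqxx big1 ?addr0 // => x /andP[_ /negPf ->].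
by rewrite big1 // => x xS; case: eqP xS => // ->; rewrite (negPf zS).
Qed.

Lemma u_vec_setD1 s (phi : {ffun 'I_s -> 'I_n * 'I_n}) S x :
  (forall i, ((phi i).1 != x) && ((phi i).2 != x)) ->
  u_vec R phi (S :\ x) = u_vec R phi S.
Proof.
by move=> phix; apply: eq_bigr => i _; case/andP: (phix i); rewrite !in_setD1 => -> ->.
Qed.

Lemma u_vec_recl s (phi : {ffun 'I_s.+1 -> 'I_n * 'I_n}) X :
  u_vec R phi X = (((phi ord0).1 \in X)%:R - ((phi ord0).2 \in X)%:R)
                  * u_vec R [ffun i => phi (lift ord0 i)] X.
Proof.
by rewrite /u_vec big_ord_recl; congr (_ * _); apply: eq_bigr => i _; rewrite ffunE.
Qed.

Lemma u_vec_setC s (phi : {ffun 'I_s -> 'I_n * 'I_n}) X :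
  u_vec R phi (~: X) = (-1) ^+ s * u_vec R phi X.
Proof.
rewrite /u_vec -[in (-1) ^+ s](card_ord s) -prodrN; apply: eq_bigr => i _.
rewrite !in_setC opprB.
by case: (_ \in X); case: (_ \in X); rewrite /= ?subrr ?subr0 ?sub0r.
Qed.

Lemma u_vec_down s (phi : {ffun 'I_s -> 'I_n * 'I_n}) S : seq_distinct phi ->
  \sum_(x in S) u_vec R phi (S :\ x) = (#|S|%:R - s%:R) * u_vec R phi S.
Proof.
elim: s phi => [|s IH] phi dphi.
  under eq_bigr do rewrite /u_vec big_ord0.
  by rewrite /u_vec big_ord0 sumr_const subr0 mulr1.
set p := phi ord0; set phi' := [ffun i => phi (lift ord0 i)].
have fixp x : u_vec R phi' (S :\ x) * ((x == p.1)%:R - (x == p.2)%:R)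
            = u_vec R phi' S * ((x == p.1)%:R - (x == p.2)%:R).
  have [xp|] := boolP ((x == p.1) || (x == p.2)).
    by rewrite u_vec_setD1 // => i; rewrite ffunE seq_distinct_head.
  by rewrite negb_or => /andP[/negPf -> /negPf ->]; rewrite subrr !mulr0.
transitivity (\sum_(x in S) (((p.1 \in S)%:R - (p.2 \in S)%:R) * u_vec R phi' (S :\ x)
               - u_vec R phi' S * ((x == p.1)%:R - (x == p.2)%:R))).
  by apply: eq_bigr => x xS; rewrite u_vec_recl -/p -/phi' -fixp !(natr_setD1 _ xS); ring.
rewrite sumrB -mulr_sumr -mulr_sumr IH ?seq_distinct_behead // sumrB !sum_eq_natr.
by rewrite u_vec_recl -natr1; ring.
Qed.

Lemma u_vec_up s (phi : {ffun 'I_s -> 'I_n * 'I_n}) S : seq_distinct phi ->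
  \sum_(y in ~: S) u_vec R phi (y |: S) = (#|~: S|%:R - s%:R) * u_vec R phi S.
Proof.
move=> dphi; have flip y : y |: S = ~: (~: S :\ y) by rewrite setCD setCK setUC.
under eq_bigr do rewrite flip u_vec_setC.
by rewrite -mulr_sumr u_vec_down // mulrCA -u_vec_setC setCK.
Qed.

(* A swap is an addition after a removal, minus the terms re-adding the removed x. *)
Lemma u_vec_swap s (phi : {ffun 'I_s -> 'I_n * 'I_n}) S : seq_distinct phi ->
  swap_sum (u_vec R phi) S
  = ((#|S|%:R - s%:R) * (#|~: S|%:R - s%:R) - s%:R) * u_vec R phi S.
Proof.
move=> dphi.
have up_out x : x \in S -> \sum_(y in ~: S) u_vec R phi (y |: (S :\ x))
    = (#|~: S|%:R + 1 - s%:R) * u_vec R phi (S :\ x) - u_vec R phi S.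
  move=> xS; have xSC : x \notin ~: S by rewrite in_setC xS.
  have := u_vec_up (S :\ x) dphi; rewrite setCD setUC big_setU1 //= setD1K //.
  by rewrite cardsU1 xSC add1n -natr1 => /(canRL (addKr _)) ->; ring.
rewrite /swap_sum; under eq_bigr => x xS do rewrite up_out //.
by rewrite sumrB -mulr_sumr u_vec_down // sumr_const -mulr_natr; ring.
Qed.

End SignedIndicators.

Lemma symdiff_eq (T : finType) (A B D : {set T}) :
  (symdiff A B == D) = (B == symdiff A D).
Proof.
apply/eqP/eqP => [<-|->]; apply/setP => z; rewrite !inE.
  by case: (z \in A); case: (z \in B).
by case: (z \in A); case: (z \in D).
Qed.

Section SymdiffPair.
Variables (T : finType) (S : {set T}) (i j : T).

Lemma symdiff_set2_in_out : i \in S -> j \notin S ->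
  symdiff S [set i; j] = j |: (S :\ i).
Proof.
move=> iS jS; have ij : i != j by apply: contraNneq jS => <-.
apply/setP => z; rewrite !inE.
have [->|zi] := eqVneq z i; first by rewrite iS (negPf ij).
by have [->|zj] := eqVneq z j; rewrite ?(negPf jS) /= ?orbT ?andbT ?andbF ?orbF.
Qed.

Lemma symdiff_set2_in_in : i \in S -> j \in S ->
  symdiff S [set i; j] = S :\ i :\ j.
Proof.
move=> iS jS; apply/setP => z; rewrite !inE.
have [->|zi] := eqVneq z i; first by rewrite iS /= andbF.
by have [->|zj] := eqVneq z j; rewrite ?jS /= ?orbT ?andbT ?andbF ?orbF.
Qed.

Lemma symdiff_set2_out_out : i \notin S -> j \notin S ->
  symdiff S [set i; j] = i |: (j |: S).
Proof.
move=> iS jS; apply/setP => z; rewrite !inE.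
have [->|zi] := eqVneq z i; first by rewrite (negPf iS).
by have [->|zj] := eqVneq z j; rewrite ?(negPf jS) /= ?orbT ?andbT ?andbF ?orbF.
Qed.
End SymdiffPair.

Definition dotv (R : pzSemiRingType) n l (a b : vec R n) : R :=
  \sum_(S : {set 'I_n} | #|S| == l) a S * b S.

Definition vote_form (R : pzSemiRingType) n l (a b : vec R n) : R :=
  \sum_(i < n) \sum_(j < n) (i != j)%:R *
    \sum_(S : {set 'I_n} | #|S| == l) \sum_(T : {set 'I_n} | #|T| == l)
      a S * b T * (symdiff S T == [set i; j])%:R.

Definition johnson_eigen (R : pzRingType) (n l t : nat) : R :=
  (l%:R - t%:R) * (n%:R - l%:R - t%:R) - t%:R.
Arguments johnson_eigen {R}.

Section InnerProduct.
Variables (R : comPzRingType) (n l : nat).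
Implicit Types (a b v w y : vec R n) (S T : {set 'I_n}).

Lemma dotvC a b : dotv l a b = dotv l b a.
Proof. by apply: eq_bigr => S _; rewrite mulrC. Qed.

Lemma sqnormE a : sqnorm l a = dotv l a a.
Proof. by apply: eq_bigr => S _; rewrite expr2. Qed.

Lemma dotv_orthogonal_sum (I : finType) (y : I -> vec R n) (f : I -> R) v w :
  (forall s t, s != t -> dotv l (y s) (y t) = 0) ->
  (forall S, #|S| = l -> v S = \sum_s y s S) ->
  (forall S, #|S| = l -> w S = \sum_t f t * y t S) ->
  dotv l v w = \sum_t f t * dotv l (y t) (y t).
Proof.
move=> orth vE wE.
transitivity (\sum_t \sum_s f t * dotv l (y s) (y t)).
  rewrite /dotv; under eq_bigr => S /eqP HS do rewrite vE // wE // mulr_suml.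
  under eq_bigr do under eq_bigr do rewrite mulr_sumr.
  under eq_bigr do rewrite exchange_big; rewrite exchange_big.
  apply: eq_bigr => t _; rewrite exchange_big /=.
  by apply: eq_bigr => s _; rewrite mulr_sumr; apply: eq_bigr => S _; ring.
apply: eq_bigr => t _; rewrite (bigD1 t) //= big1 ?addr0 // => s st.
by rewrite orth ?mulr0.
Qed.

Lemma swap_sum_big (I : finType) (P : pred I) (F : I -> vec R n) v S :
  #|S| = l -> (forall T, #|T| = l -> v T = \sum_(i | P i) F i T) ->
  swap_sum v S = \sum_(i | P i) swap_sum (F i) S.
Proof.
move=> HS vE.
transitivity (\sum_(x in S) \sum_(z in ~: S) \sum_(i | P i) F i (z |: (S :\ x))).
  apply: eq_bigr => x xS; apply: eq_bigr => z; rewrite in_setC => zS.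
  by rewrite vE // card_swap.
by under eq_bigr do rewrite exchange_big; rewrite exchange_big.
Qed.

Lemma swap_sumZ c w S : swap_sum (fun T => c * w T) S = c * swap_sum w S.
Proof. by rewrite /swap_sum mulr_sumr; apply: eq_bigr => x _; rewrite mulr_sumr. Qed.

Lemma inY_eq0 t y S : (n < t + t)%N -> inY l t y -> #|S| = l -> y S = 0.
Proof.
move=> nt [c yE] HS; rewrite yE // big1 // => phi /seq_distinct_card.
by rewrite leqNgt nt.
Qed.

Lemma inY_swap_sum t y S : inY l t y -> #|S| = l ->
  swap_sum y S = johnson_eigen n l t * y S.
Proof.
move=> [c yE] HS; rewrite (swap_sum_big HS yE) yE // mulr_sumr.
have cardC : (#|~: S|%:R : R) = n%:R - l%:R.
  by rewrite -[in n%:R](card_ord n) -(cardsC S) HS natrD (addrC l%:R) addrK.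
apply: eq_bigr => phi dphi; rewrite swap_sumZ u_vec_swap // cardC HS /johnson_eigen.
by ring.
Qed.

Lemma johnson_eigenB s t :
  johnson_eigen n l t - johnson_eigen n l s
  = (t%:R - s%:R) * ((t + s)%:R - n.+1%:R) :> R.
Proof. by rewrite /johnson_eigen natrD -natr1; ring. Qed.

End InnerProduct.

Section VotingForm.
Variables (R : numFieldType) (n l : nat).
Implicit Types (a b v w y : vec R n) (S T : {set 'I_n}).

Lemma sum_symdiff_eq w S D :
  \sum_(T : {set 'I_n} | #|T| == l) w T * (symdiff S T == D)%:R
  = (#|symdiff S D| == l)%:R * w (symdiff S D).
Proof.
under eq_bigr do rewrite symdiff_eq.
have [Dl|Dl] := boolP (#|symdiff S D| == l).
  rewrite (bigD1 (symdiff S D)) //= eqxx mulr1 mul1r big1 ?addr0 // => T.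
  by case/andP=> _ /negPf ->; rewrite mulr0.
rewrite mul0r big1 // => T Tl; case: eqP => [eT|_]; last exact: mulr0.
by rewrite -eT Tl in Dl.
Qed.

Section PairSums.
Variables (w : vec R n) (S : {set 'I_n}).
Hypothesis HS : #|S| = l.
Let pair_term i j :=
  (i != j)%:R * ((#|symdiff S [set i; j]| == l)%:R * w (symdiff S [set i; j])).

Lemma pair_sum_in i : i \in S ->
  \sum_(j < n) pair_term i j = \sum_(j in ~: S) w (j |: (S :\ i)).
Proof.
move=> iS; rewrite (bigID (mem S)) /= big1 ?add0r => [|j jS].
  apply: eq_big => [j|j jS]; first by rewrite in_setC.
  have ij : i != j by apply: contraNneq jS => <-.
  by rewrite /pair_term ij symdiff_set2_in_out // card_swap // HS eqxx !mul1r.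
have [<-|ij] := eqVneq i j; first by rewrite /pair_term eqxx mul0r.
have jSi : j \in S :\ i by rewrite in_setD1 eq_sym ij.
rewrite /pair_term symdiff_set2_in_in //.
have := cardsD1 i S; have := cardsD1 j (S :\ i); rewrite iS jSi HS => -> ->.
by rewrite !add1n ltn_eqF ?mul0r ?mulr0.
Qed.

Lemma pair_sum_out i : i \notin S ->
  \sum_(j < n) pair_term i j = \sum_(j in S) w (i |: (S :\ j)).
Proof.
move=> iS; rewrite (bigID (mem S)) /= [X in _ + X]big1 ?addr0 => [|j jS].
  apply: eq_bigr => j jS; have ij : i != j by apply: contraNneq iS => ->.
  rewrite /pair_term ij (setUC [set i]) symdiff_set2_in_out //.
  by rewrite card_swap // HS eqxx !mul1r.
have [<-|ij] := eqVneq i j; first by rewrite /pair_term eqxx mul0r.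
rewrite /pair_term symdiff_set2_out_out // !cardsU1 in_setU1 negb_or ij iS jS HS.
by rewrite gtn_eqF ?mul0r ?mulr0.
Qed.

End PairSums.

Lemma sum_pairs_symdiff w S : #|S| = l ->
  \sum_(i < n) \sum_(j < n) (i != j)%:R *
     \sum_(T : {set 'I_n} | #|T| == l) w T * (symdiff S T == [set i; j])%:R
  = 2 * swap_sum w S.
Proof.
move=> HS; under eq_bigr do under eq_bigr do rewrite sum_symdiff_eq.
rewrite (bigID (mem S)) /=.
under eq_bigr => i iS do rewrite pair_sum_in //.
under [X in _ + X]eq_bigr => i iS do rewrite pair_sum_out //.
rewrite [X in _ + X]exchange_big /=.
rewrite [X in _ + X](eq_bigr (fun j => \sum_(i in ~: S) w (i |: (S :\ j)))) => [|j _].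
  by rewrite mulr_natl mulr2n.
by apply: eq_bigl => i; rewrite in_setC.
Qed.

Lemma vote_formC a b : vote_form l a b = vote_form l b a.
Proof.
apply: eq_bigr => i _; apply: eq_bigr => j _; congr (_ * _).
rewrite exchange_big; apply: eq_bigr => S _; apply: eq_bigr => T _.
by rewrite setUC (mulrC (a T)).
Qed.

Lemma vote_formE a b : vote_form l a b = 2 * dotv l a (swap_sum b).
Proof.
transitivity (\sum_(S : {set 'I_n} | #|S| == l) a S *
    \sum_(i < n) \sum_(j < n) (i != j)%:R *
      \sum_(T : {set 'I_n} | #|T| == l) b T * (symdiff S T == [set i; j])%:R).
  rewrite /vote_form; under eq_bigr do under eq_bigr do rewrite mulr_sumr.
  under eq_bigr do rewrite exchange_big; rewrite exchange_big.
  apply: eq_bigr => S _; rewrite mulr_sumr; apply: eq_bigr => i _.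
  rewrite mulr_sumr; apply: eq_bigr => j _; rewrite !mulr_sumr.
  by apply: eq_bigr => T _; ring.
rewrite /dotv mulr_sumr; apply: eq_bigr => S /eqP HS.
by rewrite sum_pairs_symdiff // mulrCA.
Qed.

Fact two_neq0 : (2 : R) != 0. Proof. by rewrite pnatr_eq0. Qed.

Lemma sum_Vmat v :
  \sum_(i < n) \sum_(j < n) Vmat l v i j = dotv l v (swap_sum v).
Proof.
rewrite -[RHS](mulKf two_neq0) -vote_formE mulr_sumr; apply: eq_bigr => i _.
rewrite mulr_sumr; apply: eq_bigr => j _; rewrite /Vmat.
by case: eqVneq => _; rewrite ?mul0r ?mulr0 ?mul1r.
Qed.

Lemma dotv_swap_sumC a b : dotv l a (swap_sum b) = dotv l b (swap_sum a).
Proof. by apply: (mulfI two_neq0); rewrite -!vote_formE vote_formC. Qed.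

Lemma dotv_inY_eq0 s t a b : s != t -> inY l s a -> inY l t b -> dotv l a b = 0.
Proof.
move=> st aY bY.
have [ns|sn] := ltnP n (s + s).
  by rewrite /dotv big1 // => S /eqP HS; rewrite (inY_eq0 ns aY HS) mul0r.
have [nt|tn] := ltnP n (t + t).
  by rewrite /dotv big1 // => S /eqP HS; rewrite (inY_eq0 nt bY HS) mulr0.
have dotv_swap r u w : inY l r w ->
    dotv l u (swap_sum w) = johnson_eigen n l r * dotv l u w.
  move=> wY; rewrite /dotv mulr_sumr; apply: eq_bigr => S /eqP HS.
  by rewrite (inY_swap_sum wY HS) mulrCA.
have : (johnson_eigen n l t - johnson_eigen n l s) * dotv l a b = 0.
  rewrite mulrBl -(dotv_swap _ a _ bY) [dotv l a b]dotvC -(dotv_swap _ b _ aY).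
  by rewrite dotv_swap_sumC subrr.
rewrite johnson_eigenB => /eqP; rewrite !mulf_eq0 !subr_eq0 !eqr_nat -orbA.
case/or3P => [/eqP ts|/eqP|/eqP //].
  by rewrite ts eqxx in st.
lia.
Qed.

End VotingForm.

(* The gap is (m - t) n + t (t - 1). *)
Lemma johnson_eigen_ge (R : realDomainType) n l m t : (t <= m)%N ->
  (l%:R - m%:R) * n%:R - l%:R ^+ 2 <= johnson_eigen n l t :> R.
Proof.
move=> tm; rewrite /johnson_eigen.
have : (t%:R : R) <= m%:R by rewrite ler_nat.
have : (0 : R) <= n%:R by [].
have : t = 0%N \/ (1 : R) <= t%:R by case: t {tm} => [|t]; [left | right; rewrite ler1n].
by case=> [-> | t1] *; nra.
Qed.

Lemma sqnorm_ge0 (R : realDomainType) n l (a : vec R n) : 0 <= sqnorm l a.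
Proof. by apply: sumr_ge0 => S _; exact: sqr_ge0. Qed.

Theorem lemma7 (R : realFieldType) (n l m : nat) (v : vec R n) :
  (1 <= l)%N -> (l <= n)%N -> (m <= l)%N ->
  inYsum l m v ->
  \sum_(i < n) \sum_(j < n) Vmat l v i j >=
    ((l%:R - m%:R) * n%:R - l%:R ^+ 2) * sqnorm l v.
Proof.
move=> _ _ _ [y [yY vE]].
pose z (t : 'I_m.+1) := y t.
have zY (t : 'I_m.+1) : inY l t (z t) by apply: yY; rewrite -ltnS.
have orth s t : s != t -> dotv l (z s) (z t) = 0.
  by move=> st; apply: dotv_inY_eq0 (zY s) (zY t).
have swapE (S : {set 'I_n}) : #|S| = l ->
    swap_sum v S = \sum_(t < m.+1) johnson_eigen n l t * z t S.
  move=> HS; rewrite (swap_sum_big HS vE).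
  by apply: eq_bigr => t _; exact: inY_swap_sum (zY t) HS.
have vE1 (S : {set 'I_n}) : #|S| = l -> v S = \sum_(t < m.+1) 1 * z t S.
  by move=> HS; under eq_bigr do rewrite mul1r; exact: vE.
rewrite sum_Vmat sqnormE (dotv_orthogonal_sum orth vE swapE).
rewrite (dotv_orthogonal_sum orth vE vE1) mulr_sumr; apply: ler_sum => t _.
by rewrite mul1r -sqnormE ler_wpM2r ?sqnorm_ge0 ?johnson_eigen_ge // -ltnS.
Qed.
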